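(* Let $A>0$, $B\in\mathbb{R}$, $R\ge0$, and let $q_0=q_{0,R}$, where $q_{0,R}(x)=0$ for $x\le R$ and $q_{0,R}(x)=Ae^{2\mathrm{i} Bx}$ for $x>R$. Then the associated spectral functions are $$a_1(k)=1+\frac{A^2e^{4\mathrm{i} kR}}{4(k^2-B^2)},\qquad a_2(k)=1,\qquad b(k)=\frac{-\mathrm{i} Ae^{2\mathrm{i} R(k-B)}}{2(k-B)}.$$
   Context: Notation: $\sigma_3=\mathrm{diag}(1,-1)$, $X^{(i)}$ is the $i$-th column of $X$, $\mathbb{C}^\pm=\{\pm\mathrm{Im}\,k>0\}$. Let $U(x)=\begin{pmatrix}0&q_0(x)\\-\overline{q_0(-x)}&0\end{pmatrix}$, $U_+(x)=\begin{pmatrix}0&Ae^{2\mathrm{i} Bx}\\0&0\end{pmatrix}$, $U_-(x)=\begin{pmatrix}0&0\\-Ae^{2\mathrm{i} Bx}&0\end{pmatrix}$, $N_+(k)=\begin{pmatrix}1&\frac{-\mathrm{i} A}{2(k+B)}\\0&1\end{pmatrix}$, $N_-(k)=\begin{pmatrix}1&0\\\frac{-\mathrm{i} A}{2(k-B)}&1\end{pmatrix}$, $\Phi_\pm(x,k)=e^{\pm\mathrm{i} Bx\sigma_3}N_\pm(k)e^{-\mathrm{i}(k\pm B)x\sigma_3}$, $G_\pm(x,y,k)=\Phi_\pm(x,k)\Phi_\pm^{-1}(y,k)$. Let $\Psi_1,\Psi_2$ solve $\Psi_1(x,k)=e^{-\mathrm{i} Bx\sigma_3}N_-(k)+\int_{-\infty}^xG_-(x,y,k)(U-U_-)(y)\Psi_1(y,k)e^{\mathrm{i}(k-B)(x-y)\sigma_3}dy$,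 $\Psi_2(x,k)=e^{\mathrm{i} Bx\sigma_3}N_+(k)-\int_x^\infty G_+(x,y,k)(U-U_+)(y)\Psi_2(y,k)e^{\mathrm{i}(k+B)(x-y)\sigma_3}dy$. The spectral functions are $a_1(k)=\det(\Psi_1^{(1)}(0,k),\Psi_2^{(2)}(0,k))$, $a_2(k)=\det(\Psi_2^{(1)}(0,k),\Psi_1^{(2)}(0,k))$, $b(k)=\det(\Psi_2^{(1)}(0,k),\Psi_1^{(1)}(0,k))$ (on their natural domains, $k\in\overline{\mathbb{C}^+}\setminus\{\pm B\}$, $k\in\overline{\mathbb{C}^-}$, $k\in\mathbb{R}\setminus\{B\}$ respectively). *)

From Stdlib Require Import Reals.
From Coquelicot Require Import Coquelicot.
Open Scope R_scope.

Definition cexp (z : C) : C :=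
  (exp (Re z) * cos (Im z), exp (Re z) * sin (Im z)).

Definition Ceqb (z w : C) : bool :=
  if Req_EM_T (Re z) (Re w) then
    if Req_EM_T (Im z) (Im w) then true else false
  else false.

Record M2 := mkM2 { m11 : C; m12 : C; m21 : C; m22 : C }.
Definition V2 := (C * C)%type.

Definition M2mul (P Q : M2) : M2 :=
  mkM2 (m11 P * m11 Q + m12 P * m21 Q)%C (m11 P * m12 Q + m12 P * m22 Q)%C
       (m21 P * m11 Q + m22 P * m21 Q)%C (m21 P * m12 Q + m22 P * m22 Q)%C.
Definition M2sub (P Q : M2) : M2 :=
  mkM2 (m11 P - m11 Q)%C (m12 P - m12 Q)%C (m21 P - m21 Q)%C (m22 P - m22 Q)%C.
Definition M2det (P : M2) : C := (m11 P * m22 P - m12 P * m21 P)%C.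
Definition M2inv (P : M2) : M2 :=
  let d := M2det P in
  mkM2 (m22 P / d)%C (- m12 P / d)%C (- m21 P / d)%C (m11 P / d)%C.
Definition M2diag (a b : C) : M2 := mkM2 a 0 0 b.

Definition col1 (P : M2) : V2 := (m11 P, m21 P).
Definition col2 (P : M2) : V2 := (m12 P, m22 P).
Definition V2add (u v : V2) : V2 := (fst u + fst v, snd u + snd v)%C.
Definition V2sub (u v : V2) : V2 := (fst u - fst v, snd u - snd v)%C.
Definition det2 (u v : V2) : C := (fst u * snd v - snd u * fst v)%C.

Definition expsig3 (z : C) : M2 := M2diag (cexp z) (cexp (- z)).

Section Setup.
Variables (A B : R).

Definition q0R (R0 : R) (x : R) : C :=
  if Rle_dec x R0 then 0%C else (RtoC A * cexp (2 * Ci * RtoC B * RtoC x))%C.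

Definition Umat (q0 : R -> C) (x : R) : M2 :=
  mkM2 0 (q0 x) (Copp (Cconj (q0 (Ropp x)))) 0.
Definition Uplus (x : R) : M2 :=
  mkM2 0 (RtoC A * cexp (2 * Ci * RtoC B * RtoC x))%C 0 0.
Definition Uminus (x : R) : M2 :=
  mkM2 0 0 (- (RtoC A * cexp (2 * Ci * RtoC B * RtoC x)))%C 0.

Definition Nplus (k : C) : M2 :=
  mkM2 1 (- Ci * RtoC A / (2 * (k + RtoC B)))%C 0 1.
Definition Nminus (k : C) : M2 :=
  mkM2 1 0 (- Ci * RtoC A / (2 * (k - RtoC B)))%C 1.

Definition Phiplus (x : R) (k : C) : M2 :=
  M2mul (expsig3 (Ci * RtoC B * RtoC x))
        (M2mul (Nplus k) (expsig3 (- Ci * (k + RtoC B) * RtoC x))).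
Definition Phiminus (x : R) (k : C) : M2 :=
  M2mul (expsig3 (- Ci * RtoC B * RtoC x))
        (M2mul (Nminus k) (expsig3 (- Ci * (k - RtoC B) * RtoC x))).

(** This is an entire function of k:
    the apparent pole of N_{+-} at k = -+B is removable in the product, and at
    that single point G is given by its (continuous) limiting value. *)
Definition Gplus (x y : R) (k : C) : M2 :=
  if Ceqb k (- RtoC B)%C then
    M2mul (expsig3 (Ci * RtoC B * RtoC x))
      (M2mul (mkM2 1 (RtoC A * RtoC (x - y)) 0 1)
             (expsig3 (- Ci * RtoC B * RtoC y)))
  else M2mul (Phiplus x k) (M2inv (Phiplus y k)).
Definition Gminus (x y : R) (k : C) : M2 :=
  if Ceqb k (RtoC B) then
    M2mul (expsig3 (- Ci * RtoC B * RtoC x))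
      (M2mul (mkM2 1 0 (- (RtoC A * RtoC (x - y))) 1)%C
             (expsig3 (Ci * RtoC B * RtoC y)))
  else M2mul (Phiminus x k) (M2inv (Phiminus y k)).

Definition integrand1 (q0 : R -> C) (Psi1 : R -> C -> M2) (x : R) (k : C)
  (y : R) : M2 :=
  M2mul (Gminus x y k)
    (M2mul (M2sub (Umat q0 y) (Uminus y))
       (M2mul (Psi1 y k) (expsig3 (Ci * (k - RtoC B) * RtoC (x - y))))).
Definition integrand2 (q0 : R -> C) (Psi2 : R -> C -> M2) (x : R) (k : C)
  (y : R) : M2 :=
  M2mul (Gplus x y k)
    (M2mul (M2sub (Umat q0 y) (Uplus y))
       (M2mul (Psi2 y k) (expsig3 (Ci * (k + RtoC B) * RtoC (x - y))))).

Definition free1 (x : R) (k : C) : M2 :=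
  M2mul (expsig3 (- Ci * RtoC B * RtoC x)) (Nminus k).
Definition free2 (x : R) (k : C) : M2 :=
  M2mul (expsig3 (Ci * RtoC B * RtoC x)) (Nplus k).
End Setup.

Definition is_int_left (f : R -> V2) (x : R) (l : V2) : Prop :=
  is_RInt_gen (fun y => fst (f y)) (Rbar_locally m_infty) (at_point x) (fst l) /\
  is_RInt_gen (fun y => snd (f y)) (Rbar_locally m_infty) (at_point x) (snd l).
Definition is_int_right (f : R -> V2) (x : R) (l : V2) : Prop :=
  is_RInt_gen (fun y => fst (f y)) (at_point x) (Rbar_locally p_infty) (fst l) /\
  is_RInt_gen (fun y => snd (f y)) (at_point x) (Rbar_locally p_infty) (snd l).

Definition solves1 (A B : R) (q0 : R -> C) (Psi1 : R -> C -> M2)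
  (col : M2 -> V2) (k : C) : Prop :=
  forall x : R, exists I : V2,
    is_int_left (fun y => col (integrand1 A B q0 Psi1 x k y)) x I /\
    col (Psi1 x k) = V2add (col (free1 A B x k)) I.
Definition solves2 (A B : R) (q0 : R -> C) (Psi2 : R -> C -> M2)
  (col : M2 -> V2) (k : C) : Prop :=
  forall x : R, exists I : V2,
    is_int_right (fun y => col (integrand2 A B q0 Psi2 x k y)) x I /\
    col (Psi2 x k) = V2sub (col (free2 A B x k)) I.

From Stdlib Require Import Reals Lra.
From Coquelicot Require Import Coquelicot.
Open Scope R_scope.

(* For the step potential, U - U_- is strictly lower triangular on (-oo, R0]
   and vanishes on (-oo, -R0), while U - U_+ is strictly upper triangular on
   [-R0, +oo) and vanishes on (R0, +oo); moreover G_- is lower and G_+ upper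
   triangular.  Hence in the Volterra equation for Psi1 the first row carries
   no integral for x <= R0, so it equals the free term there; at x = 0 the
   second row then integrates an explicit exponential over [-R0, 0].
   Symmetrically for Psi2.  This gives the four columns at x = 0 in closed
   form, and the spectral functions are 2x2 determinants of them. *)

Lemma Ci_sqr : (Ci * Ci = -1)%C.
Proof. apply injective_projections; simpl; ring. Qed.

Lemma Cminus_neq_0 (z w : C) : z <> w -> (z - w <> 0)%C.
Proof. intros Hzw E; apply Hzw; replace z with (z - w + w)%C by ring; rewrite E; ring. Qed.

Lemma Cplus_neq_0 (z w : C) : z <> (- w)%C -> (z + w <> 0)%C.
Proof. intros Hzw E; apply Hzw; replace z with (z + w - w)%C by ring; rewrite E; ring. Qed.

Lemma Cconj_RtoC (r : R) : Cconj (RtoC r) = RtoC r.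
Proof. apply injective_projections; simpl; ring. Qed.

Lemma cexp_eq (a b : C) : Re a = Re b -> Im a = Im b -> cexp a = cexp b.
Proof. unfold cexp; intros -> ->; reflexivity. Qed.

Lemma cexp_add (a b : C) : cexp (a + b)%C = (cexp a * cexp b)%C.
Proof.
destruct a, b; unfold cexp; simpl; rewrite exp_plus, cos_plus, sin_plus.
apply injective_projections; simpl; ring.
Qed.

Lemma cexp_0 : cexp 0 = 1%C.
Proof.
unfold cexp; simpl; rewrite exp_0, cos_0, sin_0.
apply injective_projections; simpl; ring.
Qed.

Lemma cexp_conj (z : C) : Cconj (cexp z) = cexp (Cconj z).
Proof.
destruct z; unfold cexp, Cconj; simpl; rewrite cos_neg, sin_neg.
apply injective_projections; simpl; ring.
Qed.

Ltac cexp_collect := rewrite <- ?cexp_add; apply cexp_eq; simpl; ring.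

Lemma cexp_opp_Ci_mul (k : C) (y : R) :
  (cexp (- Ci * k * RtoC y) * cexp (Ci * k * RtoC y))%C = 1%C.
Proof. rewrite <- cexp_0; cexp_collect. Qed.

Lemma cexp_mul_0 (c : C) : cexp (c * RtoC 0) = 1%C.
Proof. rewrite <- cexp_0; apply cexp_eq; simpl; ring. Qed.

Lemma cexp_prod4_scal (w a b d e : C) :
  (cexp a * (w * cexp b) * cexp d * cexp e = w * cexp (a + b + d + e))%C.
Proof. rewrite !cexp_add; ring. Qed.

Lemma Cdiv_mul_Ci (z w : C) : w <> 0%C -> (z / (Ci * w) = - Ci * z / w)%C.
Proof.
(* [field] does not know [Ci * Ci = -1], so that factor is inserted by hand. *)
intro Hw; replace z with (- (Ci * Ci) * z)%C at 1 by (rewrite Ci_sqr; ring).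
field; split; [exact Hw | exact Ci_nz].
Qed.

Lemma expsig3_mul_0 (c : C) : expsig3 (c * RtoC 0) = mkM2 1 0 0 1.
Proof.
unfold expsig3, M2diag; rewrite cexp_mul_0, (cexp_eq _ (c * RtoC 0)), cexp_mul_0 by (simpl; ring).
reflexivity.
Qed.

Lemma is_derive_pair (u v : R -> R) (x du dv : R) :
  is_derive u x du -> is_derive v x dv ->
  @is_derive R_AbsRing C_R_NormedModule (fun t => (u t, v t)) x (du, dv).
Proof.
intros Hu Hv.
assert (H := @is_derive_plus _ C_R_NormedModule _ _ x _ _
  (@is_derive_scal_l _ C_R_NormedModule u x du (1, 0) Hu)
  (@is_derive_scal_l _ C_R_NormedModule v x dv (0, 1) Hv)).
eapply is_derive_ext; [| eapply filterdiff_ext_lin; [exact H |]]; simpl;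
  intro t; apply injective_projections; cbn -[Rplus Rmult]; ring.
Qed.

Lemma is_derive_scal_cexp (w c : C) (x : R) :
  @is_derive R_AbsRing C_R_NormedModule (fun t => (w * cexp (c * RtoC t))%C) x
    (w * c * cexp (c * RtoC x))%C.
Proof.
eapply is_derive_ext; [intro t; symmetry; apply surjective_pairing |].
rewrite (surjective_pairing (w * c * cexp _)%C).
destruct w, c; apply is_derive_pair; unfold cexp; simpl; auto_derive; auto; unfold Rminus; ring.
Qed.

Lemma is_RInt_scal_cexp (w c : C) (a b : R) : c <> 0%C ->
  @is_RInt C_R_NormedModule (fun y => (w * cexp (c * RtoC y))%C) a b
    (w * (cexp (c * RtoC b) - cexp (c * RtoC a)) / c)%C.
Proof.
intro Hc.
pose (F t := (w / c * cexp (c * RtoC t))%C).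
assert (HF : forall t, @is_derive R_AbsRing C_R_NormedModule F t (w * cexp (c * RtoC t))%C).
{ intro t; replace (w * cexp (c * RtoC t))%C with (w / c * c * cexp (c * RtoC t))%C
    by (field; exact Hc).
  apply is_derive_scal_cexp. }
replace (w * (cexp (c * RtoC b) - cexp (c * RtoC a)) / c)%C
  with (@minus C_R_NormedModule (F b) (F a)).
- apply (@is_RInt_derive C_R_CompleteNormedModule); intros t _; [apply HF |].
  exact (ex_derive_continuous _ t (ex_intro _ _ (is_derive_scal_cexp w c t))).
- change (F b - F a = w * (cexp (c * RtoC b) - cexp (c * RtoC a)) / c)%C.
  unfold F; field; exact Hc.
Qed.

Section ImproperIntegral.
Context {V : CompleteNormedModule R_AbsRing}.

Lemma is_RInt_gen_left_support (f : R -> V) (c x : R) (l l' : V) :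
  c <= x -> (forall y, y < c -> f y = zero) ->
  is_RInt_gen f (Rbar_locally m_infty) (at_point x) l -> is_RInt f c x l' -> l = l'.
Proof.
intros Hcx Hf Hl Hl'.
assert (Htail : is_RInt_gen f (Rbar_locally m_infty) (at_point c) (plus l (opp l'))).
{ apply (is_RInt_gen_Chasles f x); [exact Hl |].
  apply is_RInt_gen_at_point, (is_RInt_swap f _ _ _ Hl'). }
assert (Htail0 : is_RInt_gen f (Rbar_locally m_infty) (at_point c) (scal 0 (plus l (opp l')))).
{ eapply (is_RInt_gen_ext (V := CompleteNormedModule.NormedModule _ V)),
    (is_RInt_gen_scal (V := CompleteNormedModule.NormedModule _ V)), Htail.
  exists (fun a => a < c) (fun b => b = c); [now exists c | reflexivity |].
  intros a b Ha -> y Hy; simpl in Hy.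
  rewrite Rmin_left, Rmax_right in Hy by lra.
  rewrite Hf by lra; exact (scal_zero_l _). }
assert (Hl'gen := is_RInt_gen_Chasles f c _ _ Htail0 (proj2 (is_RInt_gen_at_point f c x l') Hl')).
rewrite <- (is_RInt_gen_unique f l Hl), (is_RInt_gen_unique f _ Hl'gen).
transitivity (plus zero l'); [f_equal; exact (scal_zero_l _) | exact (plus_zero_l _)].
Qed.

Lemma is_RInt_gen_right_support (f : R -> V) (x c : R) (l l' : V) :
  x <= c -> (forall y, c < y -> f y = zero) ->
  is_RInt_gen f (at_point x) (Rbar_locally p_infty) l -> is_RInt f x c l' -> l = l'.
Proof.
intros Hxc Hf Hl Hl'.
assert (Htail : is_RInt_gen f (at_point c) (Rbar_locally p_infty) (plus (opp l') l)).
{ apply (is_RInt_gen_Chasles f x); [| exact Hl].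
  apply is_RInt_gen_at_point, (is_RInt_swap f _ _ _ Hl'). }
assert (Htail0 : is_RInt_gen f (at_point c) (Rbar_locally p_infty) (scal 0 (plus (opp l') l))).
{ eapply (is_RInt_gen_ext (V := CompleteNormedModule.NormedModule _ V)),
    (is_RInt_gen_scal (V := CompleteNormedModule.NormedModule _ V)), Htail.
  exists (fun a => a = c) (fun b => c < b); [reflexivity | now exists c |].
  intros a b -> Hb y Hy; simpl in Hy.
  rewrite Rmin_left, Rmax_right in Hy by lra.
  rewrite Hf by lra; exact (scal_zero_l _). }
assert (Hl'gen := is_RInt_gen_Chasles f c _ _ (proj2 (is_RInt_gen_at_point f x c l') Hl') Htail0).
rewrite <- (is_RInt_gen_unique f l Hl), (is_RInt_gen_unique f _ Hl'gen).
transitivity (plus l' zero); [f_equal; exact (scal_zero_l _) | exact (plus_zero_r _)].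
Qed.

End ImproperIntegral.

Lemma Ceqb_false (z w : C) : z <> w -> Ceqb z w = false.
Proof.
intro Hzw; unfold Ceqb.
destruct (Req_EM_T (Re z) (Re w)) as [Hre|]; [| reflexivity].
destruct (Req_EM_T (Im z) (Im w)) as [Him|]; [| reflexivity].
destruct Hzw; destruct z, w; simpl in *; congruence.
Qed.

Lemma M2mul_inv_lower (a c d a' c' d' : C) : (a' * d')%C = 1%C ->
  let G := M2mul (mkM2 a 0 c d) (M2inv (mkM2 a' 0 c' d')) in
  m12 G = 0%C /\ m22 G = (d * a')%C.
Proof.
intro Hdet; unfold M2inv, M2det; simpl.
assert (E : (a' * d' - 0 * c')%C = 1%C) by (rewrite Hdet; ring). rewrite E.
split; field.
Qed.

Lemma M2mul_inv_upper (a b d a' b' d' : C) : (a' * d')%C = 1%C ->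
  let G := M2mul (mkM2 a b 0 d) (M2inv (mkM2 a' b' 0 d')) in
  m11 G = (a * d')%C /\ m21 G = 0%C.
Proof.
intro Hdet; unfold M2inv, M2det; simpl.
assert (E : (a' * d' - b' * 0)%C = 1%C) by (rewrite Hdet; ring). rewrite E.
split; field.
Qed.

Lemma M2mul_lower_nilpotent (G P : M2) (c a b : C) : m12 G = 0%C ->
  M2mul G (M2mul (mkM2 0 0 c 0) (M2mul P (M2diag a b))) =
  mkM2 0 0 (m22 G * c * m11 P * a) (m22 G * c * m12 P * b).
Proof. destruct G, P; unfold M2mul, M2diag; simpl; intros ->; f_equal; ring. Qed.

Lemma M2mul_upper_nilpotent (G P : M2) (b a d : C) : m21 G = 0%C ->
  M2mul G (M2mul (mkM2 0 b 0 0) (M2mul P (M2diag a d))) =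
  mkM2 (m11 G * b * m21 P * a) (m11 G * b * m22 P * d) 0 0.
Proof. destruct G, P; unfold M2mul, M2diag; simpl; intros ->; f_equal; ring. Qed.

Section Jost.
Variables A B : R.

Lemma Phiminus_lower (x : R) (k : C) :
  Phiminus A B x k =
  mkM2 (cexp (- Ci * k * RtoC x)) 0
       (- Ci * RtoC A / (2 * (k - RtoC B)) * cexp (- Ci * (k - 2 * RtoC B) * RtoC x))
       (cexp (Ci * k * RtoC x)).
Proof.
assert (E1 : (cexp (- Ci * RtoC B * RtoC x) * cexp (- Ci * (k - RtoC B) * RtoC x))%C
             = cexp (- Ci * k * RtoC x)) by cexp_collect.
assert (E2 : (cexp (- (- Ci * RtoC B * RtoC x)) * cexp (- Ci * (k - RtoC B) * RtoC x))%C
             = cexp (- Ci * (k - 2 * RtoC B) * RtoC x)) by cexp_collect.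
assert (E3 : (cexp (- (- Ci * RtoC B * RtoC x)) * cexp (- (- Ci * (k - RtoC B) * RtoC x)))%C
             = cexp (Ci * k * RtoC x)) by cexp_collect.
unfold Phiminus, Nminus, expsig3, M2diag, M2mul; simpl.
f_equal; [rewrite <- E1 | | rewrite <- E2 | rewrite <- E3]; ring.
Qed.

Lemma Phiplus_upper (x : R) (k : C) :
  Phiplus A B x k =
  mkM2 (cexp (- Ci * k * RtoC x))
       (- Ci * RtoC A / (2 * (k + RtoC B)) * cexp (Ci * (k + 2 * RtoC B) * RtoC x))
       0 (cexp (Ci * k * RtoC x)).
Proof.
assert (E1 : (cexp (Ci * RtoC B * RtoC x) * cexp (- Ci * (k + RtoC B) * RtoC x))%C
             = cexp (- Ci * k * RtoC x)) by cexp_collect.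
assert (E2 : (cexp (Ci * RtoC B * RtoC x) * cexp (- (- Ci * (k + RtoC B) * RtoC x)))%C
             = cexp (Ci * (k + 2 * RtoC B) * RtoC x)) by cexp_collect.
assert (E3 : (cexp (- (Ci * RtoC B * RtoC x)) * cexp (- (- Ci * (k + RtoC B) * RtoC x)))%C
             = cexp (Ci * k * RtoC x)) by cexp_collect.
unfold Phiplus, Nplus, expsig3, M2diag, M2mul; simpl.
f_equal; [rewrite <- E1 | rewrite <- E2 | | rewrite <- E3]; ring.
Qed.

Lemma Gminus_12 (x y : R) (k : C) : m12 (Gminus A B x y k) = 0%C.
Proof.
unfold Gminus; destruct (Ceqb _ _).
- unfold expsig3, M2diag, M2mul; simpl; ring.
- rewrite !Phiminus_lower; apply M2mul_inv_lower.
  apply cexp_opp_Ci_mul.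
Qed.

Lemma Gminus_22 (x y : R) (k : C) : k <> RtoC B ->
  m22 (Gminus A B x y k) = cexp (Ci * k * RtoC (x - y)).
Proof.
intro Hk; unfold Gminus; rewrite Ceqb_false, !Phiminus_lower by exact Hk.
rewrite (proj2 (M2mul_inv_lower _ _ _ _ _ _ (cexp_opp_Ci_mul k y))); cexp_collect.
Qed.

Lemma Gplus_21 (x y : R) (k : C) : m21 (Gplus A B x y k) = 0%C.
Proof.
unfold Gplus; destruct (Ceqb _ _).
- unfold expsig3, M2diag, M2mul; simpl; ring.
- rewrite !Phiplus_upper; apply M2mul_inv_upper.
  apply cexp_opp_Ci_mul.
Qed.

Lemma Gplus_11 (x y : R) (k : C) : k <> (- RtoC B)%C ->
  m11 (Gplus A B x y k) = cexp (- Ci * k * RtoC (x - y)).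
Proof.
intro Hk; unfold Gplus; rewrite Ceqb_false, !Phiplus_upper by exact Hk.
rewrite (proj1 (M2mul_inv_upper _ _ _ _ _ _ (cexp_opp_Ci_mul k y))); cexp_collect.
Qed.

Lemma free1_at_0 (k : C) : free1 A B 0 k = Nminus A B k.
Proof.
unfold free1; rewrite expsig3_mul_0; unfold Nminus, M2mul; simpl; f_equal; ring.
Qed.

Lemma free2_at_0 (k : C) : free2 A B 0 k = Nplus A B k.
Proof.
unfold free2; rewrite expsig3_mul_0; unfold Nplus, M2mul; simpl; f_equal; ring.
Qed.

End Jost.

Section Potential.
Variables A B R0 : R.
Let q := q0R A B R0.
Let Mminus (y : R) := M2sub (Umat q y) (Uminus A B y).
Let Mplus (y : R) := M2sub (Umat q y) (Uplus A B y).

Lemma Mminus_lower (y : R) : y <= R0 -> Mminus y = mkM2 0 0 (m21 (Mminus y)) 0.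
Proof.
intro Hy; unfold Mminus, q, M2sub, Umat, Uminus, q0R; simpl.
destruct (Rle_dec y R0); [f_equal; ring | lra].
Qed.

Lemma Mminus_21_far (y : R) : y < - R0 -> m21 (Mminus y) = 0%C.
Proof.
intro Hy; unfold Mminus, q, M2sub, Umat, Uminus, q0R; simpl.
destruct (Rle_dec (- y) R0); [lra |].
rewrite Cmult_conj, cexp_conj, Cconj_RtoC.
replace (Cconj (2 * Ci * RtoC B * RtoC (- y))) with (2 * Ci * RtoC B * RtoC y)%C
  by (apply injective_projections; simpl; ring).
ring.
Qed.

Lemma Mminus_21_near (y : R) : - R0 <= y ->
  m21 (Mminus y) = (RtoC A * cexp (2 * Ci * RtoC B * RtoC y))%C.
Proof.
intro Hy; unfold Mminus, q, M2sub, Umat, Uminus, q0R; simpl.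
destruct (Rle_dec (- y) R0); [rewrite Cconj_RtoC; ring | lra].
Qed.

Lemma Mplus_upper (y : R) : - R0 <= y -> Mplus y = mkM2 0 (m12 (Mplus y)) 0 0.
Proof.
intro Hy; unfold Mplus, q, M2sub, Umat, Uplus, q0R; simpl.
destruct (Rle_dec (- y) R0); [rewrite Cconj_RtoC; f_equal; ring | lra].
Qed.

Lemma Mplus_12_far (y : R) : R0 < y -> m12 (Mplus y) = 0%C.
Proof.
intro Hy; unfold Mplus, q, M2sub, Umat, Uplus, q0R; simpl.
destruct (Rle_dec y R0); [lra | ring].
Qed.

Lemma Mplus_12_near (y : R) : y <= R0 ->
  m12 (Mplus y) = (- RtoC A * cexp (2 * Ci * RtoC B * RtoC y))%C.
Proof.
intro Hy; unfold Mplus, q, M2sub, Umat, Uplus, q0R; simpl.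
destruct (Rle_dec y R0); [ring | lra].
Qed.

Lemma integrand1_lower (Psi : R -> C -> M2) (x : R) (k : C) (y : R) : y <= R0 ->
  integrand1 A B q Psi x k y =
  mkM2 0 0
    (m22 (Gminus A B x y k) * m21 (Mminus y) * m11 (Psi y k)
       * cexp (Ci * (k - RtoC B) * RtoC (x - y)))
    (m22 (Gminus A B x y k) * m21 (Mminus y) * m12 (Psi y k)
       * cexp (- (Ci * (k - RtoC B) * RtoC (x - y)))).
Proof.
intro Hy; unfold integrand1; fold (Mminus y).
rewrite Mminus_lower by exact Hy; apply M2mul_lower_nilpotent, Gminus_12.
Qed.

Lemma integrand2_upper (Psi : R -> C -> M2) (x : R) (k : C) (y : R) : - R0 <= y ->
  integrand2 A B q Psi x k y =
  mkM2
    (m11 (Gplus A B x y k) * m12 (Mplus y) * m21 (Psi y k)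
       * cexp (Ci * (k + RtoC B) * RtoC (x - y)))
    (m11 (Gplus A B x y k) * m12 (Mplus y) * m22 (Psi y k)
       * cexp (- (Ci * (k + RtoC B) * RtoC (x - y))))
    0 0.
Proof.
intro Hy; unfold integrand2; fold (Mplus y).
rewrite Mplus_upper by exact Hy; apply M2mul_upper_nilpotent, Gplus_21.
Qed.

End Potential.

Section Spectral.
Variables A B R0 : R.
Hypothesis HR0 : 0 <= R0.

Lemma solves1_top (Psi1 : R -> C -> M2) (col : M2 -> V2) (k : C) (x : R) :
  col = col1 \/ col = col2 -> solves1 A B (q0R A B R0) Psi1 col k -> x <= R0 ->
  fst (col (Psi1 x k)) = fst (col (free1 A B x k)).
Proof.
intros Hcol Hs Hx; destruct (Hs x) as [I [[HI _] ->]].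
assert (HI0 : fst I = 0%C).
{ eapply (is_RInt_gen_left_support (V := C_R_CompleteNormedModule) _ x x _ _ (Rle_refl x));
    [| exact HI | exact (@is_RInt_point C_R_NormedModule _ x)].
  intros y Hy; cbv beta; rewrite integrand1_lower by lra; destruct Hcol as [-> | ->]; reflexivity. }
simpl; rewrite HI0; ring.
Qed.

Lemma solves2_bottom (Psi2 : R -> C -> M2) (col : M2 -> V2) (k : C) (x : R) :
  col = col1 \/ col = col2 -> solves2 A B (q0R A B R0) Psi2 col k -> - R0 <= x ->
  snd (col (Psi2 x k)) = snd (col (free2 A B x k)).
Proof.
intros Hcol Hs Hx; destruct (Hs x) as [I [[_ HI] ->]].
assert (HI0 : snd I = 0%C).
{ eapply (is_RInt_gen_right_support (V := C_R_CompleteNormedModule) _ x x _ _ (Rle_refl x));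
    [| exact HI | exact (@is_RInt_point C_R_NormedModule _ x)].
  intros y Hy; cbv beta; rewrite integrand2_upper by lra; destruct Hcol as [-> | ->]; reflexivity. }
simpl; rewrite HI0; ring.
Qed.

Lemma Psi1_col2_at_0 (Psi1 : R -> C -> M2) (k : C) :
  solves1 A B (q0R A B R0) Psi1 col2 k -> col2 (Psi1 0 k) = (RtoC 0, RtoC 1).
Proof.
intro Hs.
assert (Htop : forall y, y <= R0 -> m12 (Psi1 y k) = 0%C).
{ intros y Hy; change (fst (col2 (Psi1 y k)) = 0%C).
  rewrite (solves1_top _ _ _ _ (or_intror eq_refl) Hs Hy).
  unfold free1, M2mul, Nminus; simpl; ring. }
apply injective_projections; [exact (Htop 0 HR0) |].
destruct (Hs 0) as [I [[_ HI] ->]].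
assert (HI0 : snd I = 0%C).
{ eapply (is_RInt_gen_left_support (V := C_R_CompleteNormedModule) _ 0 0 _ _ (Rle_refl 0));
    [| exact HI | exact (@is_RInt_point C_R_NormedModule _ 0)].
  intros y Hy; cbv beta; rewrite (integrand1_lower _ _ _ _ _ _ y), (Htop y) by lra.
  cbn [col2 snd m22]; rewrite Cmult_0_r, Cmult_0_l; reflexivity. }
rewrite free1_at_0; cbn [V2add snd col2 Nminus m22]; rewrite HI0; ring.
Qed.

Lemma Psi2_col1_at_0 (Psi2 : R -> C -> M2) (k : C) :
  solves2 A B (q0R A B R0) Psi2 col1 k -> col1 (Psi2 0 k) = (RtoC 1, RtoC 0).
Proof.
intro Hs.
assert (Hbot : forall y, - R0 <= y -> m21 (Psi2 y k) = 0%C).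
{ intros y Hy; change (snd (col1 (Psi2 y k)) = 0%C).
  rewrite (solves2_bottom _ _ _ _ (or_introl eq_refl) Hs Hy).
  unfold free2, M2mul, Nplus; simpl; ring. }
apply injective_projections; [| apply Hbot; lra].
destruct (Hs 0) as [I [[HI _] ->]].
assert (HI0 : fst I = 0%C).
{ eapply (is_RInt_gen_right_support (V := C_R_CompleteNormedModule) _ 0 0 _ _ (Rle_refl 0));
    [| exact HI | exact (@is_RInt_point C_R_NormedModule _ 0)].
  intros y Hy; cbv beta; rewrite (integrand2_upper _ _ _ _ _ _ y), (Hbot y) by lra.
  cbn [col1 fst m11]; rewrite Cmult_0_r, Cmult_0_l; reflexivity. }
rewrite free2_at_0; cbn [V2sub fst col1 Nplus m11]; rewrite HI0; ring.
Qed.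

Lemma Psi1_col1_at_0 (Psi1 : R -> C -> M2) (k : C) : k <> RtoC B ->
  solves1 A B (q0R A B R0) Psi1 col1 k ->
  col1 (Psi1 0 k) = (RtoC 1,
    - Ci * RtoC A * cexp (2 * Ci * RtoC R0 * (k - RtoC B)) / (2 * (k - RtoC B)))%C.
Proof.
intros Hk Hs.
assert (Htop : forall y, y <= R0 -> m11 (Psi1 y k) = cexp (- Ci * RtoC B * RtoC y)).
{ intros y Hy; change (fst (col1 (Psi1 y k)) = cexp (- Ci * RtoC B * RtoC y)).
  rewrite (solves1_top _ _ _ _ (or_introl eq_refl) Hs Hy).
  unfold free1, expsig3, M2diag, M2mul; simpl; ring. }
assert (Hd : (k - RtoC B <> 0)%C) by exact (Cminus_neq_0 _ _ Hk).
assert (Hd2 : (-2 * (k - RtoC B) <> 0)%C)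
  by (apply Cmult_neq_0; [intro H; injection H; lra | exact Hd]).
pose (c := (Ci * (-2 * (k - RtoC B)))%C).
assert (Hc : c <> 0%C) by exact (Cmult_neq_0 _ _ Ci_nz Hd2).
assert (Hnear : forall y, - R0 <= y <= R0 ->
  snd (col1 (integrand1 A B (q0R A B R0) Psi1 0 k y)) = (RtoC A * cexp (c * RtoC y))%C).
{ intros y Hy; rewrite (integrand1_lower _ _ _ _ _ _ y), Mminus_21_near, Htop by lra.
  rewrite Gminus_22 by exact Hk; cbn [col1 snd m21].
  rewrite cexp_prod4_scal; f_equal; unfold c; cexp_collect. }
apply injective_projections.
{ simpl; rewrite Htop by exact HR0; apply cexp_mul_0. }
destruct (Hs 0) as [I [[_ HI] ->]].
assert (HI_val : snd I = (RtoC A * (cexp (c * RtoC 0) - cexp (c * RtoC (- R0))) / c)%C).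
{ eapply (is_RInt_gen_left_support (V := C_R_CompleteNormedModule) _ (- R0) 0);
    [lra | | exact HI | ].
  - intros y Hy; cbv beta; rewrite (integrand1_lower _ _ _ _ _ _ y), Mminus_21_far by lra.
    cbn [col1 snd m21]; rewrite Cmult_0_r, !Cmult_0_l; reflexivity.
  - eapply is_RInt_ext, is_RInt_scal_cexp, Hc.
    intros y Hy; rewrite Rmin_left, Rmax_right in Hy by lra; symmetry; apply Hnear; lra. }
rewrite free1_at_0; cbn [V2add snd col1 Nminus m21]; rewrite HI_val, cexp_mul_0.
replace (cexp (c * RtoC (- R0))) with (cexp (2 * Ci * RtoC R0 * (k - RtoC B)))
  by (unfold c; cexp_collect).
unfold c; rewrite Cdiv_mul_Ci by exact Hd2.
field; exact Hd.
Qed.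

Lemma Psi2_col2_at_0 (Psi2 : R -> C -> M2) (k : C) : k <> (- RtoC B)%C ->
  solves2 A B (q0R A B R0) Psi2 col2 k ->
  col2 (Psi2 0 k) = (
    - Ci * RtoC A * cexp (2 * Ci * RtoC R0 * (k + RtoC B)) / (2 * (k + RtoC B)),
    RtoC 1)%C.
Proof.
intros Hk Hs.
assert (Hbot : forall y, - R0 <= y -> m22 (Psi2 y k) = cexp (- Ci * RtoC B * RtoC y)).
{ intros y Hy; change (snd (col2 (Psi2 y k)) = cexp (- Ci * RtoC B * RtoC y)).
  rewrite (solves2_bottom _ _ _ _ (or_intror eq_refl) Hs Hy).
  unfold free2, expsig3, M2diag, M2mul; simpl.
  rewrite (cexp_eq _ (- Ci * RtoC B * RtoC y)) by (simpl; ring); ring. }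
assert (Hd : (k + RtoC B <> 0)%C) by exact (Cplus_neq_0 _ _ Hk).
assert (Hd2 : (2 * (k + RtoC B) <> 0)%C)
  by (apply Cmult_neq_0; [intro H; injection H; lra | exact Hd]).
pose (c := (Ci * (2 * (k + RtoC B)))%C).
assert (Hc : c <> 0%C) by exact (Cmult_neq_0 _ _ Ci_nz Hd2).
assert (Hnear : forall y, - R0 <= y <= R0 ->
  fst (col2 (integrand2 A B (q0R A B R0) Psi2 0 k y)) = (- RtoC A * cexp (c * RtoC y))%C).
{ intros y Hy; rewrite (integrand2_upper _ _ _ _ _ _ y), Mplus_12_near, Hbot by lra.
  rewrite Gplus_11 by exact Hk; cbn [col2 fst m12].
  rewrite cexp_prod4_scal; f_equal; unfold c; cexp_collect. }
apply injective_projections.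
2:{ simpl; rewrite Hbot by lra; apply cexp_mul_0. }
destruct (Hs 0) as [I [[HI _] ->]].
assert (HI_val : fst I = (- RtoC A * (cexp (c * RtoC R0) - cexp (c * RtoC 0)) / c)%C).
{ eapply (is_RInt_gen_right_support (V := C_R_CompleteNormedModule) _ 0 R0);
    [exact HR0 | | exact HI | ].
  - intros y Hy; cbv beta; rewrite (integrand2_upper _ _ _ _ _ _ y), Mplus_12_far by lra.
    cbn [col2 fst m12]; rewrite Cmult_0_r, !Cmult_0_l; reflexivity.
  - eapply is_RInt_ext, is_RInt_scal_cexp, Hc.
    intros y Hy; rewrite Rmin_left, Rmax_right in Hy by lra; symmetry; apply Hnear; lra. }
rewrite free2_at_0; cbn [V2sub fst col2 Nplus m12]; rewrite HI_val, cexp_mul_0.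
replace (cexp (c * RtoC R0)) with (cexp (2 * Ci * RtoC R0 * (k + RtoC B)))
  by (unfold c; cexp_collect).
unfold c; rewrite Cdiv_mul_Ci by exact Hd2.
field; exact Hd.
Qed.

End Spectral.

Theorem proposition4 (A B R0 : R) (Psi1 Psi2 : R -> C -> M2) :
  0 < A -> 0 <= R0 ->
  (* Psi1^(1) on its natural domain  Im k >= 0, k <> B *)
  (forall k : C, 0 <= Im k -> k <> RtoC B -> solves1 A B (q0R A B R0) Psi1 col1 k) ->
  (* Psi1^(2) on Im k <= 0 *)
  (forall k : C, Im k <= 0 -> solves1 A B (q0R A B R0) Psi1 col2 k) ->
  (* Psi2^(1) on Im k <= 0 *)
  (forall k : C, Im k <= 0 -> solves2 A B (q0R A B R0) Psi2 col1 k) ->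
  (* Psi2^(2) on Im k >= 0, k <> -B *)
  (forall k : C, 0 <= Im k -> k <> RtoC (- B) -> solves2 A B (q0R A B R0) Psi2 col2 k) ->
  (forall k : C, 0 <= Im k -> k <> RtoC B -> k <> RtoC (- B) ->
     det2 (col1 (Psi1 0 k)) (col2 (Psi2 0 k)) =
     (1 + RtoC (A ^ 2) * cexp (4 * Ci * k * RtoC R0)
            / (4 * (k ^ 2 - RtoC (B ^ 2))))%C) /\
  (forall k : C, Im k <= 0 ->
     det2 (col1 (Psi2 0 k)) (col2 (Psi1 0 k)) = 1%C) /\
  (forall k : R, k <> B ->
     det2 (col1 (Psi2 0 (RtoC k))) (col1 (Psi1 0 (RtoC k))) =
     (- Ci * RtoC A * cexp (2 * Ci * RtoC R0 * RtoC (k - B))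
        / (2 * RtoC (k - B)))%C).
Proof.
intros _ HR0 Hs11 Hs12 Hs21 Hs22; split; [| split].
- intros k Hk HkB HkmB.
  assert (HkmB' : k <> (- RtoC B)%C) by (rewrite <- RtoC_opp; exact HkmB).
  rewrite (Psi1_col1_at_0 A B R0 HR0 Psi1 k HkB (Hs11 k Hk HkB)),
    (Psi2_col2_at_0 A B R0 HR0 Psi2 k HkmB' (Hs22 k Hk HkmB)); unfold det2; cbn [fst snd].
  replace (RtoC (A ^ 2)) with (- (Ci * Ci) * RtoC A * RtoC A)%C
    by (rewrite Ci_sqr, RtoC_pow; ring).
  replace (cexp (4 * Ci * k * RtoC R0))
    with (cexp (2 * Ci * RtoC R0 * (k - RtoC B)) * cexp (2 * Ci * RtoC R0 * (k + RtoC B)))%C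
    by cexp_collect.
  replace (k ^ 2 - RtoC (B ^ 2))%C with ((k - RtoC B) * (k + RtoC B))%C
    by (rewrite RtoC_pow; ring).
  field; split; [exact (Cplus_neq_0 _ _ HkmB') | exact (Cminus_neq_0 _ _ HkB)].
- intros k Hk.
  rewrite (Psi2_col1_at_0 A B R0 HR0 Psi2 k (Hs21 k Hk)),
    (Psi1_col2_at_0 A B R0 HR0 Psi1 k (Hs12 k Hk)); unfold det2; simpl; ring.
- intros k HkB.
  assert (HkB' : RtoC k <> RtoC B) by (intro H; apply HkB, RtoC_inj, H).
  assert (Him : Im (RtoC k) = 0) by reflexivity.
  rewrite (Psi2_col1_at_0 A B R0 HR0 Psi2 k (Hs21 k ltac:(lra))),
    (Psi1_col1_at_0 A B R0 HR0 Psi1 k HkB' (Hs11 k ltac:(lra) HkB')); unfold det2; simpl.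
  rewrite RtoC_minus; ring.
Qed.
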